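(* Under the standing setup below, let $\theta$ be a function on (an open subset of) $M$ with $e_2(\theta)=e_3(\theta)=0$ and $e_1(\theta)=-\lambda_2$ (such a function exists locally), and set $$V=\frac{-(b_1+i\lambda_2)E_0+E_1}{\sqrt{1+b_1^2+\lambda_2^2}}.$$ Then $D_{E_2}V=D_{E_3}V=0$ and $D_{E_1}V=3\lambda_2\, iV$. Consequently $V$ takes values in the unit circle of a fixed complex line $\mathbb{C}\,v\subset\mathbb{C}^4$, and writing $V=e^{it}v$ one has $e_1(t)=3\lambda_2$, $e_2(t)=e_3(t)=0$; in particular, after adding a constant to $\theta$, $\theta=-t/3$.
   Context: Standing setup: $\mathbb{C}P^3(4)$ carries the Fubini–Study metric of constant holomorphic sectional curvature $4$, complex structure $J$, and $\pi:S^7(1)\subset\mathbb{C}^4\to\mathbb{C}P^3(4)$ is the Hopf projection. $M$ is a connected $3$-dimensional non-minimal Lagrangian submanifold of $\mathbb{C}P^3(4)$ attaining equality at every point in $\delta_M\le 2+\tfrac32\|H\|^2$ (here $\delta_M=\tau-\inf K$, $\tau$ the scalar curvature, $H=\frac13\operatorname{trace}h$). Let $h$ be the second fundamental form and $C(X,Y,Z)=\langle h(X,Y),JZ\rangle$. Locally there is an orthonormal frame $e_1,e_2,e_3$ with $C(e_2,e_2,e_2)=-C(e_3,e_3,e_2)=:a$, $C(e_1,e_1,e_1)=4\lambda_2$, $C(e_2,e_2,e_1)=C(e_3,e_3,e_1)=\lambda_2$ with $\lambda_2\neq0$, and all other components zero up to symmetry. $E_0:M\to S^7(1)\subset\mathbb{C}^4$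 is a horizontal lift of $M$ (i.e. $\pi\circ E_0$ is the inclusion and $dE_0(X)$ is orthogonal to $E_0$ and $iE_0$), $E_j=dE_0(e_j)$, and $D$ is the flat connection of $\mathbb{C}^4=\mathbb{R}^8$; $D_{E_j}$ denotes differentiation along $e_j$. There is a smooth function $b_1$ such that $D_{E_1}E_1=4\lambda_2 iE_1-E_0$ and $D_{E_j}E_1=(b_1+i\lambda_2)E_j$ for $j=2,3$; moreover $e_2(\lambda_2)=e_3(\lambda_2)=e_2(b_1)=e_3(b_1)=0$, $e_1(\lambda_2)=2\lambda_2b_1$ and $e_1(b_1)=-(1+b_1^2+3\lambda_2^2)$. *)

From HB Require Import structures.
From mathcomp Require Import all_boot all_order all_algebra.
From mathcomp Require Import all_classical all_reals all_analysis.
Set Implicit Arguments. Unset Strict Implicit. Unset Printing Implicit Defensive.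
Import Order.TTheory GRing.Theory Num.Theory.
Import numFieldNormedType.Exports.
Local Open Scope ring_scope.

(* C^4 = R^8 realised as pairs (real part, imaginary part) of vectors of R^4. *)
Definition C4 (R : realType) := ('rV[R]_4 * 'rV[R]_4)%type.

Definition cmul (R : realType) (a b : R) (z : C4 R) : C4 R :=
  (a *: z.1 - b *: z.2, a *: z.2 + b *: z.1).

Definition iC (R : realType) (z : C4 R) : C4 R := cmul 0 1 z.

(* the Euclidean (real) inner product  <z,w> = Re(z . conj w)  of C^4 = R^8 *)
Definition inner (R : realType) (z w : C4 R) : R :=
  \sum_(k < 4) (z.1 0 k * w.1 0 k + z.2 0 k * w.2 0 k).

Definition Vfield (R : realType) (b1 lam : 'rV[R]_3 -> R)
    (E0 E1 : 'rV[R]_3 -> C4 R) (x : 'rV[R]_3) : C4 R :=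
  let s := Num.sqrt (1 + b1 x ^+ 2 + lam x ^+ 2) in
  (s^-1) *: (cmul (- b1 x) (- lam x) (E0 x) + E1 x).

From HB Require Import structures.
From mathcomp Require Import all_boot all_order all_algebra.
From mathcomp Require Import all_classical all_reals all_analysis.
From mathcomp Require Import ring lra.
Import Order.TTheory GRing.Theory Num.Theory.
Import numFieldNormedType.Exports.
Local Open Scope classical_set_scope.
Local Open Scope ring_scope.

(* As e_1 theta = - lam and e_2 theta = e_3 theta = 0,
   the rotated field e^{3 i theta} V has zero derivative along e_1, e_2, e_3.
   These vectors span R^3, since dE_0 maps them to an orthonormal family, so
   e^{3 i theta} V is locally constant, hence equal to a fixed unit vector v on the
   connected set U; thus V = e^{i t} v with t = - 3 theta. *)

Section ComplexStructure.
Variable R : realType.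
Implicit Types (z w : C4 R) (a b c d : R).

Lemma C4_ext z w : z.1 = w.1 -> z.2 = w.2 -> z = w.
Proof. by case: z w => ? ? [? ?] /= -> ->. Qed.

Lemma iCE z : iC z = (- z.2, z.1).
Proof. by rewrite /iC /cmul !scale0r !scale1r !add0r. Qed.

Lemma iC_is_linear : linear (@iC R).
Proof. by move=> a z w; rewrite !iCE; apply: C4_ext; rewrite /= ?scalerN ?opprD. Qed.
HB.instance Definition _ :=
  GRing.isLinear.Build R (C4 R) (C4 R) _ (@iC R) iC_is_linear.

Lemma iCK z : iC (iC z) = - z.
Proof. by rewrite !iCE. Qed.

Lemma iC_continuous : continuous (@iC R).
Proof.
move=> z; rewrite (_ : @iC R = fun z => (- z.2, z.1)); last exact/funext/iCE.
apply: (cvg_pair (G := nbhs (- z.2)) (H := nbhs z.1)).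
  by apply: cvgN; exact: cvg_snd.
exact: cvg_fst.
Qed.

Lemma cmulE a b z : cmul a b z = a *: z + b *: iC z.
Proof. by rewrite iCE; apply: C4_ext; rewrite /= ?scalerN // addrC. Qed.

Lemma C4_fstD z w : (z + w).1 = z.1 + w.1. Proof. by []. Qed.
Lemma C4_sndD z w : (z + w).2 = z.2 + w.2. Proof. by []. Qed.
Lemma C4_fstN z : (- z).1 = - z.1. Proof. by []. Qed.
Lemma C4_sndN z : (- z).2 = - z.2. Proof. by []. Qed.
Lemma C4_fstZ a z : (a *: z).1 = a *: z.1. Proof. by []. Qed.
Lemma C4_sndZ a z : (a *: z).2 = a *: z.2. Proof. by []. Qed.
Lemma C4_fst0 : (0 : C4 R).1 = 0. Proof. by []. Qed.
Lemma C4_snd0 : (0 : C4 R).2 = 0. Proof. by []. Qed.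
Lemma iC_fst z : (iC z).1 = - z.2. Proof. by rewrite iCE. Qed.
Lemma iC_snd z : (iC z).2 = z.1. Proof. by rewrite iCE. Qed.

Definition C4_projE := (C4_fstD, C4_sndD, C4_fstN, C4_sndN, C4_fstZ, C4_sndZ,
  C4_fst0, C4_snd0, iC_fst, iC_snd).

End ComplexStructure.

Ltac C4_coords :=
  apply: C4_ext; apply/matrixP => ? ?; rewrite ?cmulE !C4_projE !mxE /=.

Section ComplexMultiplication.
Variable R : realType.
Implicit Types (z : C4 R) (a b c d : R).

Lemma cmulA a b c d z :
  cmul a b (cmul c d z) = cmul (a * c - b * d) (a * d + b * c) z.
Proof. by C4_coords; ring. Qed.

Lemma cmul1 z : cmul 1 0 z = z.
Proof. by C4_coords; ring. Qed.

Lemma cmul_rot_inv (g : R) z : cmul (cos (- g)) (sin (- g)) (cmul (cos g) (sin g) z) = z.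
Proof.
rewrite cmulA cosN sinN mulNr opprK -!expr2 cos2Dsin2 mulNr mulrC subrr.
exact: cmul1.
Qed.
End ComplexMultiplication.

Section InnerProduct.
Variable R : realType.
Implicit Types (z w u : C4 R) (a b : R).

Lemma innerC z w : inner z w = inner w z.
Proof. by apply: eq_bigr => k _; rewrite mulrC [z.2 0 k * _]mulrC. Qed.

Lemma innerDl z w u : inner (z + w) u = inner z u + inner w u.
Proof. by rewrite /inner -big_split /=; apply: eq_bigr => k _; rewrite !mxE; ring. Qed.

Lemma innerZl a z w : inner (a *: z) w = a * inner z w.
Proof. by rewrite /inner mulr_sumr; apply: eq_bigr => k _; rewrite !mxE; ring. Qed.

Lemma innerDr z w u : inner u (z + w) = inner u z + inner u w.
Proof. by rewrite innerC innerDl !(innerC u). Qed.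

Lemma innerZr a z w : inner w (a *: z) = a * inner w z.
Proof. by rewrite innerC innerZl innerC. Qed.

Lemma inner0l w : inner 0 w = 0.
Proof. by rewrite -(scale0r (0 : C4 R)) innerZl mul0r. Qed.

Lemma inner_suml n (F : 'I_n -> C4 R) w :
  inner (\sum_(j < n) F j) w = \sum_(j < n) inner (F j) w.
Proof.
by elim/big_rec2: _ => [|j a b _ <-]; [exact: inner0l | exact: innerDl].
Qed.

Lemma inner_iCl z w : inner (iC z) w = - inner z (iC w).
Proof. by rewrite !iCE /inner -sumrN; apply: eq_bigr => k _ /=; rewrite !mxE; ring. Qed.

Lemma inner_iC z w : inner (iC z) (iC w) = inner z w.
Proof. by rewrite inner_iCl iCK -[- w]scaleN1r innerZr mulN1r opprK. Qed.

Lemma inner_iCr_self z : inner z (iC z) = 0.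
Proof. by have := inner_iCl z z; rewrite innerC; lra. Qed.

Lemma inner_cmul a b z w :
  inner w z = 0 -> inner w (iC z) = 0 ->
  inner (cmul a b z + w) (cmul a b z + w) = (a ^+ 2 + b ^+ 2) * inner z z + inner w w.
Proof.
move=> wz wiz.
rewrite cmulE !(innerDl, innerDr, innerZl, innerZr) inner_iC inner_iCr_self.
rewrite inner_iCl inner_iCr_self (innerC z w) (innerC (iC z) w) wz wiz; ring.
Qed.

End InnerProduct.

Section DirectionalDerivatives.
Context {R : realType} {V W W' : normedModType R}.

(* Scaling under its own head constant, to carry the bilinear instance below. *)
Definition scalev (a : R^o) (w : W) : W := a *: w.

Lemma scalev_is_bilinear :
  bilinear_for
    (GRing.Scale.Law.clone _ _ *:%R _) (GRing.Scale.Law.clone _ _ *:%R _) scalev.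
Proof.
split=> [u'|u] a x y /=; rewrite /scalev.
- by rewrite scalerDl scalerA.
- by rewrite scalerDr !scalerA mulrC.
Qed.
HB.instance Definition _ :=
  bilinear_isBilinear.Build R R W W _ _ scalev scalev_is_bilinear.

Lemma differentiable_scale (k : V -> R) (f : V -> W) x :
  differentiable k x -> differentiable f x ->
  differentiable (fun y => k y *: f y) x.
Proof.
move=> dk df.
have -> : (fun y => k y *: f y) = (fun p => scalev p.1 p.2) \o (fun y => (k y, f y)).
  by [].
apply: differentiable_comp; first exact: differentiable_pair.
apply: differentiable_bilin => p.
exact: (@scale_continuous _ _ (p.1, p.2)).
Qed.

Lemma is_derive_scale {k : V -> R} {f : V -> W} {x v dk df} :
  is_derive x v k dk -> is_derive x v f df ->
  is_derive x v (fun y => k y *: f y) (k x *: df + dk *: f x).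
Proof.
move=> [dkx <-] [dfx <-].
have quot : (fun h => h^-1 *: (((fun y => k y *: f y) \o shift x) (h *: v) - k x *: f x))
    @ 0^' --> k x *: 'D_v f x + 'D_v k x *: f x.
  evar (fg : R -> W); rewrite [X in X @ _](_ : _ = fg) /=; last first.
    rewrite funeqE => h.
    have -> : k (h *: v + x) *: f (h *: v + x) - k x *: f x =
      k (h *: v + x) *: (f (h *: v + x) - f x) + (k (h *: v + x) - k x) *: f x.
      by rewrite scalerBr scalerBl addrA subrK.
    rewrite scalerDr scalerA mulrC -scalerA.
    by rewrite [_ *: (_ *: f x)]scalerA /fg.
  apply: cvgD; last exact: cvgZr_tmp.
  apply: cvg_comp2 (@scale_continuous _ _ (_, _)) => /=; last exact: dfx.
  suff : {for 0, continuous (fun h : R => k (h *: v + x))}.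
    by move=> /continuous_withinNx; rewrite scale0r add0r.
  exact/differentiable_continuous/derivable1_diffP/(derivable1P _ _ _).1.
split; first by apply/cvg_ex; eexists; exact: quot.
exact: cvg_lim quot.
Qed.

Lemma is_derive_linear {L : {linear W -> W'}} {f : V -> W} {x v df} :
  continuous L -> is_derive x v f df -> is_derive x v (L \o f) (L df).
Proof.
move=> Lc [dfx <-].
have quot : (fun h => h^-1 *: ((L \o f \o shift x) (h *: v) - L (f x)))
    @ 0^' --> L ('D_v f x).
  rewrite (_ : (fun h => _) = L \o (fun h => h^-1 *: ((f \o shift x) (h *: v) - f x))).
    by apply: cvg_comp; [exact: dfx | exact: Lc].
  by rewrite funeqE => h /=; rewrite linearZZ [in RHS]linearB.
split; first by apply/cvg_ex; eexists; exact: quot.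
exact: cvg_lim quot.
Qed.

Lemma is_derive_line (f : V -> W) x v a df :
  is_derive (a *: v + x) v f df <-> is_derive a 1 (fun h : R => f (h *: v + x)) df.
Proof.
have E : (fun h : R => h^-1 *: ((f \o shift (a *: v + x)) (h *: v) - f (a *: v + x))) =
         (fun h : R => h^-1 *: (((fun h : R => f (h *: v + x)) \o shift a) (h *: 1) -
            (fun h : R => f (h *: v + x)) a)).
  by rewrite funeqE => h /=; rewrite scaler1 scalerDl addrA.
by split=> -[d e]; split; rewrite /derivable /derive ?E // -E.
Qed.

End DirectionalDerivatives.

Lemma is_derive_compR {R : realType} {V : normedModType R} {g : V -> R}
    {phi : R -> R} {x v dg dphi} :
  is_derive x v g dg -> is_derive (g x) 1 phi dphi ->
  is_derive x v (phi \o g) (dphi * dg).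
Proof.
move=> hg hphi; have x0 : 0 *: v + x = x by rewrite scale0r add0r.
rewrite -x0 is_derive_line; apply: is_derive1_comp; last by rewrite -is_derive_line x0.
by rewrite /= x0.
Qed.

Section ComplexCalculus.
Context {R : realType} {V : normedModType R}.
Implicit Types (a b g : V -> R) (f : V -> C4 R).

Lemma is_derive_iC {f x v df} :
  is_derive x v f df -> is_derive x v (fun y => iC (f y)) (iC df).
Proof. exact: (is_derive_linear (@iC_continuous R)). Qed.

Lemma differentiable_cmul a b f x :
  differentiable a x -> differentiable b x -> differentiable f x ->
  differentiable (fun y => cmul (a y) (b y) (f y)) x.
Proof.
move=> da db df; under eq_fun do rewrite cmulE.
apply: differentiableD; apply: differentiable_scale => //.
exact: (differentiable_comp df (linear_differentiable _ (@iC_continuous R))).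
Qed.

Lemma is_derive_cmul {a b f x v da db df} :
  is_derive x v a da -> is_derive x v b db -> is_derive x v f df ->
  is_derive x v (fun y => cmul (a y) (b y) (f y))
    (cmul (a x) (b x) df + cmul da db (f x)).
Proof.
move=> ha hb hf; under eq_fun do rewrite cmulE.
have := is_derive_scale ha hf; have := is_derive_scale hb (is_derive_iC hf) => hbf haf.
by apply: is_derive_eq; rewrite !cmulE addrACA.
Qed.

(* [cmul (cos g) (sin g)] is multiplication by e^{i g}. *)
Lemma is_derive_rot {g f x v dg df} :
  is_derive x v g dg -> is_derive x v f df ->
  is_derive x v (fun y => cmul (cos (g y)) (sin (g y)) (f y))
    (cmul (cos (g x)) (sin (g x)) (df + dg *: iC (f x))).
Proof.
move=> hg hf.
have hc := is_derive_compR hg (is_derive_cos (g x)).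
have hs := is_derive_compR hg (is_derive_sin (g x)).
apply: is_derive_eq; first exact: (is_derive_cmul hc hs hf).
by C4_coords; ring.
Qed.

Lemma differentiable_rot {g f x} :
  differentiable g x -> differentiable f x ->
  differentiable (fun y => cmul (cos (g y)) (sin (g y)) (f y)) x.
Proof.
move=> dg df; apply: differentiable_cmul => //; apply: differentiable_comp => //.
- by apply/derivable1_diffP; case: (is_derive_cos (g x)).
- by apply/derivable1_diffP; case: (is_derive_sin (g x)).
Qed.

Lemma is_derive_rotZ_eq0 (k : R) {g f x v c} :
  is_derive x v g (- c) -> is_derive x v f (iC ((k * c) *: f x)) ->
  is_derive x v (fun y => cmul (cos (k * g y)) (sin (k * g y)) (f y)) 0.
Proof.
move=> hg hf; apply: is_derive_eq; first exact: is_derive_rot (is_deriveZ k hg) hf.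
by rewrite -[k *: _]/(k * _); C4_coords; ring.
Qed.

End ComplexCalculus.

Lemma is_derive_invsqrt {R : realType} {r : R} : 0 < r ->
  is_derive r 1 (fun s => (Num.sqrt s)^-1) (- (2 * r * Num.sqrt r)^-1).
Proof.
move=> r0; have s0 : Num.sqrt r != 0 by rewrite gt_eqF ?sqrtr_gt0.
have rE : Num.sqrt r ^+ 2 = r by rewrite sqr_sqrtr ?ltW.
apply: is_derive_eq; first exact: (is_deriveV s0 (is_derive1_sqrt r0)).
by rewrite -[LHS]/(- _ ^- 2 * _); field: rE; rewrite s0 gt_eqF.
Qed.

Section Vfield.
Context {R : realType} {E0 E1 : 'rV[R]_3 -> C4 R} {b1 lam : 'rV[R]_3 -> R}.
Local Notation V := (Vfield b1 lam E0 E1).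
Local Notation q x := (1 + b1 x ^+ 2 + lam x ^+ 2).

Lemma Vfield_sqnorm_gt0 x : 0 < q x.
Proof. by rewrite -addrA ltr_pwDl // addr_ge0 // sqr_ge0. Qed.

Lemma is_derive_Vfield {x v db dl dE0 dE1} :
  is_derive x v b1 db -> is_derive x v lam dl ->
  is_derive x v E0 dE0 -> is_derive x v E1 dE1 ->
  is_derive x v V ((Num.sqrt (q x))^-1 *:
      (cmul (- b1 x) (- lam x) dE0 + cmul (- db) (- dl) (E0 x) + dE1)
    - ((b1 x * db + lam x * dl) / q x) *: V x).
Proof.
move=> hb hl h0 h1.
have hq : is_derive x v (cst 1 + b1 ^+ 2 + lam ^+ 2) (2 * b1 x * db + 2 * lam x * dl).
  by apply: is_derive_eq; rewrite add0r.
have hs := is_derive_compR hq (is_derive_invsqrt (Vfield_sqnorm_gt0 x)).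
have hP := is_deriveD (is_derive_cmul (is_deriveN hb) (is_deriveN hl) h0) h1.
apply: is_derive_eq; first exact: (is_derive_scale hs hP).
rewrite /Vfield /= scalerA -scaleNr; congr (_ + _ *: _).
have qx := Vfield_sqnorm_gt0 x.
by field; rewrite !gt_eqF ?sqrtr_gt0.
Qed.

Lemma differentiable_Vfield {x} :
  differentiable b1 x -> differentiable lam x ->
  differentiable E0 x -> differentiable E1 x -> differentiable V x.
Proof.
move=> db dl d0 d1; apply: differentiable_scale.
  apply: (@differentiable_comp _ _ _ _ (cst 1 + b1 ^+ 2 + lam ^+ 2)
            (fun s => (Num.sqrt s)^-1)).
    apply: differentiableD; last exact: differentiableX.
    by apply: differentiableD; [exact: differentiable_cst | exact: differentiableX].
  apply/derivable1_diffP.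
  by have [] := is_derive_invsqrt (Vfield_sqnorm_gt0 x).
apply: differentiableD => //; apply: differentiable_cmul => //; exact: differentiableN.
Qed.

Lemma is_derive_Vfield0 {x v dE0} :
  is_derive x v b1 0 -> is_derive x v lam 0 ->
  is_derive x v E0 dE0 -> is_derive x v E1 (cmul (b1 x) (lam x) dE0) ->
  is_derive x v V 0.
Proof.
move=> hb hl h0 h1; apply: is_derive_eq; first exact: is_derive_Vfield hb hl h0 h1.
by C4_coords; ring.
Qed.

Lemma is_derive_Vfield_iC {x v} :
  is_derive x v b1 (- (1 + b1 x ^+ 2 + 3 * lam x ^+ 2)) ->
  is_derive x v lam (2 * lam x * b1 x) ->
  is_derive x v E0 (E1 x) -> is_derive x v E1 (iC ((4 * lam x) *: E1 x) - E0 x) ->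
  is_derive x v V (iC ((3 * lam x) *: V x)).
Proof.
move=> hb hl h0 h1; apply: is_derive_eq; first exact: is_derive_Vfield hb hl h0 h1.
have qx := Vfield_sqnorm_gt0 x.
have sE : Num.sqrt (q x) ^+ 2 = q x by rewrite sqr_sqrtr ?ltW.
have s0 : Num.sqrt (q x) != 0 by rewrite gt_eqF ?sqrtr_gt0.
rewrite /Vfield /=; move: sE s0; set s := Num.sqrt _ => sE s0.
by C4_coords; field: sE; rewrite s0 gt_eqF.
Qed.

Lemma Vfield_unit {x} :
  inner (E0 x) (E0 x) = 1 -> inner (E1 x) (E1 x) = 1 ->
  inner (E1 x) (E0 x) = 0 -> inner (E1 x) (iC (E0 x)) = 0 ->
  inner (V x) (V x) = 1.
Proof.
move=> h00 h11 h10 h1i; rewrite /Vfield /= innerZl innerZr inner_cmul // h00 h11.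
rewrite mulrA -expr2 exprVn sqr_sqrtr ?ltW ?Vfield_sqnorm_gt0 //.
by rewrite !sqrrN mulr1 -addrA [_ + 1]addrC addrA mulVf // gt_eqF ?Vfield_sqnorm_gt0.
Qed.
End Vfield.

Section Frames.
Variable R : realType.

Lemma free_rV_span n (e : 'I_n -> 'rV[R]_n) :
  (forall a : 'rV[R]_n, \sum_j a 0 j *: e j = 0 -> a = 0) ->
  forall u : 'rV[R]_n, exists a : 'rV[R]_n, u = \sum_j a 0 j *: e j.
Proof.
move=> free u; pose M : 'M[R]_n := \matrix_j e j.
have ME (a : 'rV[R]_n) : a *m M = \sum_j a 0 j *: e j.
  by rewrite mulmx_sum_row; apply: eq_bigr => j _; rewrite rowK.
have : row_free M.
  rewrite -kermx_eq0; apply/eqP/matrixP => i j; rewrite mxE.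
  have := mulmx_ker M => /(congr1 (row i)); rewrite row_mul row0 ME => /free.
  by move/(congr1 (fun a : 'rV[R]_n => a 0 j)); rewrite !mxE.
rewrite row_free_unit -row_full_unit => /row_fullP[B MB].
by exists (u *m B); rewrite -ME -mulmxA MB mulmx1.
Qed.

Lemma orthonormal_image_free (U : lmodType R) n (L : {linear U -> C4 R})
    (e : 'I_n -> U) :
  (forall j k, inner (L (e j)) (L (e k)) = (j == k)%:R) ->
  forall a : 'rV[R]_n, \sum_j a 0 j *: e j = 0 -> a = 0.
Proof.
move=> orth a /(congr1 L); rewrite linear_sum linear0 => Le0.
apply/rowP => k; rewrite mxE.
have := congr1 (fun w => inner w (L (e k))) Le0.
rewrite /= inner_suml (bigD1 k) //= linearZ innerZl orth eqxx mulr1 big1 ?addr0.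
  by rewrite inner0l.
by move=> j /negbTE jk; rewrite linearZ innerZl orth jk mulr0.
Qed.

Lemma is_derive_eq0_span (V X : normedModType R) n (f : V -> X) z (e : 'I_n -> V) :
  differentiable f z -> (forall u, exists a : 'rV[R]_n, u = \sum_j a 0 j *: e j) ->
  (forall j, is_derive z (e j) f 0) -> forall u, is_derive z u f 0.
Proof.
move=> df span hf u; have [a ->] := span u.
apply: DeriveDef; first exact: diff_derivable.
rewrite deriveE // linear_sum big1 // => j _.
by rewrite linearZ /= -deriveE // derive_val scaler0.
Qed.

Lemma is_derive0_orthonormal_frame (X : normedModType R) n (E0 : 'rV[R]_n -> C4 R)
    (f : 'rV[R]_n -> X) z (e : 'I_n -> 'rV[R]_n) (Ed : 'I_n -> C4 R) :
  differentiable E0 z -> differentiable f z ->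
  (forall j, is_derive z (e j) E0 (Ed j)) ->
  (forall j k, inner (Ed j) (Ed k) = (j == k)%:R) ->
  (forall j, is_derive z (e j) f 0) -> forall u, is_derive z u f 0.
Proof.
move=> dE0 df hE orth; apply: is_derive_eq0_span => //.
apply: free_rV_span; apply: (@orthonormal_image_free _ _ ('d E0 z)).
by move=> j k; rewrite -!deriveE // !derive_val.
Qed.

End Frames.

Lemma connected_locally_cst {T : topologicalType} {Y : Type} {U : set T} {f : T -> Y} :
  connected U -> (forall x, U x -> \forall y \near x, f y = f x) ->
  forall x y, U x -> U y -> f y = f x.
Proof.
move=> cU lc x y Ux Uy; pose B := [set z | U z /\ f z = f x].
suff BU : B = U by have [] : B y by rewrite BU.
apply: cU; first by exists x.
- exists (interior [set z | f z = f x]); first exact: open_interior.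
  apply/seteqP; split=> z; last by case=> Uz /interior_subset.
  by case=> Uz fz; split=> //; apply: filterS (lc z Uz) => w /= ->.
- exists (closure B); first exact: closed_closure.
  apply/seteqP; split=> z; first by move=> Bz; split; [case: Bz | exact: subset_closure].
  case=> Uz Bz; split=> //; have [w [[_ fw] fwz]] := Bz _ (lc z Uz).
  by rewrite -fwz.
Qed.

Section LocallyConstant.
Context {R : realType} {V : normedModType R}.

Lemma is_derive0_ball_cst (f : V -> R) x r :
  (forall y, ball x r y -> forall u, is_derive y u f 0) ->
  forall y, ball x r y -> f y = f x.
Proof.
move=> df y xy; pose g s := f (s *: (y - x) + x).
have seg (s : R) : s \in `[0, 1] -> ball x r (s *: (y - x) + x).
  rewrite in_itv /= => /andP[s0 s1]; move: xy; rewrite -!ball_normE /=.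
  rewrite opprD addrA addrAC subrr add0r normrN normrZ (ger0_norm s0) distrC => xy.
  by apply: le_lt_trans xy; rewrite ler_piMl.
have dg (s : R) : s \in `[0, 1] -> is_derive s 1 g 0.
  by move=> s01; apply/(is_derive_line f x (y - x) s 0)/df/seg.
have dg' (s : R) : s \in `]0, 1[ -> is_derive s 1 g 0.
  by rewrite in_itv /= => /andP[/ltW s0 /ltW s1]; apply: dg; rewrite in_itv /= s0.
have cg : {within `[0, 1], continuous g}.
  by apply: derivable_within_continuous => s /dg[].
have [c _] := MVT_segment ler01 dg' cg.
by rewrite /g scale1r scale0r add0r subrK mul0r => /eqP; rewrite subr_eq0 => /eqP.
Qed.

Lemma is_derive_mx_entry {m n} {M : V -> 'M[R]_(m, n)} {x v dM} i j :
  is_derive x v M dM -> is_derive x v (fun y => M y i j) (dM i j).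
Proof.
move=> [dMx <-]; split; first exact: (derivable_mxP M x v).1 dMx i j.
by rewrite derive_mx // mxE.
Qed.

Lemma is_derive0_ball_cst_mx m n (M : V -> 'M[R]_(m, n)) x r :
  (forall y, ball x r y -> forall u, is_derive y u M 0) ->
  forall y, ball x r y -> M y = M x.
Proof.
move=> dM y xy; apply/matrixP => i j.
apply: (is_derive0_ball_cst (fun z => M z i j) x r _ y xy) => z xz u.
by have := is_derive_mx_entry i j (dM z xz u); rewrite mxE.
Qed.

Lemma is_derive0_ball_cst_C4 (f : V -> C4 R) x r :
  (forall y, ball x r y -> forall u, is_derive y u f 0) ->
  forall y, ball x r y -> f y = f x.
Proof.
move=> df y xy.
have fst_cont : continuous (fst : C4 R -> 'rV[R]_4) by move=> ?; exact: cvg_fst.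
have snd_cont : continuous (snd : C4 R -> 'rV[R]_4) by move=> ?; exact: cvg_snd.
apply: C4_ext.
- apply: (is_derive0_ball_cst_mx _ _ (fun z => (f z).1) x r _ y xy) => z xz u.
  exact: (is_derive_linear fst_cont (df z xz u)).
- apply: (is_derive0_ball_cst_mx _ _ (fun z => (f z).2) x r _ y xy) => z xz u.
  exact: (is_derive_linear snd_cont (df z xz u)).
Qed.

Lemma is_derive0_near_cst (U : set V) (f : V -> C4 R) x :
  open U -> (forall y, U y -> forall u, is_derive y u f 0) -> U x ->
  \forall y \near x, f y = f x.
Proof.
move=> oU df Ux; have /nbhs_ballP[r r0 xrU] : nbhs x U by exact: open_nbhs_nbhs.
apply/nbhs_ballP; exists r => // y; apply: is_derive0_ball_cst_C4 => z /xrU.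
exact: df.
Qed.

Lemma rot_stationary_phase {U : set V} {F : V -> C4 R} {g : V -> R} :
  open U -> connected U -> (forall x, U x -> inner (F x) (F x) = 1) ->
  (forall x, U x -> forall u,
     is_derive x u (fun y => cmul (cos (g y)) (sin (g y)) (F y)) 0) ->
  exists2 v : C4 R, inner v v = 1 &
    forall x, U x -> F x = cmul (cos (- g x)) (sin (- g x)) v.
Proof.
move=> oU cU F1 dW; pose W y := cmul (cos (g y)) (sin (g y)) (F y).
have [[x0 Ux0]|U0] := pselect (exists x, U x); last first.
  exists (delta_mx 0 0, 0) => [|x Ux]; last by exfalso; apply: U0; exists x.
  by rewrite /inner big_ord_recl big1 => [|k _]; rewrite !mxE //=; lra.
exists (W x0) => [|x Ux].
  rewrite /W -[cmul _ _ _]addr0 inner_cmul; rewrite ?inner0l ?addr0 //.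
  by rewrite cos2Dsin2 mul1r F1.
have -> : W x0 = W x.
  apply: (connected_locally_cst cU _ x x0 Ux Ux0) => y Uy.
  exact: is_derive0_near_cst oU dW Uy.
by rewrite cmul_rot_inv.
Qed.

End LocallyConstant.

Theorem mainTheorem3 (R : realType) (U : set 'rV[R]_3)
  (e1 e2 e3 : 'rV[R]_3 -> 'rV[R]_3)
  (E0 E1 E2 E3 : 'rV[R]_3 -> C4 R)
  (lam b1 theta : 'rV[R]_3 -> R) :
  open U -> connected U ->
  (* regularity *)
  (forall x, U x -> [/\ differentiable E0 x, differentiable E1 x,
                        differentiable E2 x & differentiable E3 x]) ->
  (forall x, U x -> [/\ differentiable lam x, differentiable b1 x
                      & differentiable theta x]) ->
  (* E0 is a horizontal lift into S^7, E_j = dE0(e_j) *)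
  (forall x, U x -> inner (E0 x) (E0 x) = 1) ->
  (forall x, U x -> [/\ is_derive x (e1 x) E0 (E1 x),
                        is_derive x (e2 x) E0 (E2 x)
                      & is_derive x (e3 x) E0 (E3 x)]) ->
  (forall x, U x -> forall (j : 'I_3),
       inner (nth E0 [:: E1; E2; E3] j x) (E0 x) = 0 /\
       inner (nth E0 [:: E1; E2; E3] j x) (iC (E0 x)) = 0) ->
  (* e1, e2, e3 orthonormal for the induced metric; M Lagrangian *)
  (forall x, U x -> forall (j k : 'I_3),
       inner (nth E0 [:: E1; E2; E3] j x) (nth E0 [:: E1; E2; E3] k x)
         = (j == k)%:R /\
       inner (nth E0 [:: E1; E2; E3] j x) (iC (nth E0 [:: E1; E2; E3] k x))
         = 0) ->
  (* structure equations of the standing setup *)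
  (forall x, U x -> lam x != 0) ->
  (forall x, U x ->
     [/\ is_derive x (e1 x) E1 (iC ((4 * lam x) *: E1 x) - E0 x),
         is_derive x (e2 x) E1 (cmul (b1 x) (lam x) (E2 x))
       & is_derive x (e3 x) E1 (cmul (b1 x) (lam x) (E3 x))]) ->
  (forall x, U x ->
     [/\ is_derive x (e2 x) lam 0, is_derive x (e3 x) lam 0,
         is_derive x (e2 x) b1 0 & is_derive x (e3 x) b1 0]) ->
  (forall x, U x ->
     is_derive x (e1 x) lam (2 * lam x * b1 x) /\
     is_derive x (e1 x) b1 (- (1 + b1 x ^+ 2 + 3 * lam x ^+ 2))) ->
  (* the function theta *)
  (forall x, U x ->
     [/\ is_derive x (e2 x) theta 0, is_derive x (e3 x) theta 0
       & is_derive x (e1 x) theta (- lam x)]) ->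
  let V := Vfield b1 lam E0 E1 in
  (forall x, U x ->
     [/\ is_derive x (e2 x) V 0, is_derive x (e3 x) V 0
       & is_derive x (e1 x) V (iC ((3 * lam x) *: V x))]) /\
  exists (v : C4 R) (t : 'rV[R]_3 -> R),
    [/\ inner v v = 1,
        (forall x, U x ->
           [/\ V x = cmul (cos (t x)) (sin (t x)) v,
               is_derive x (e1 x) t (3 * lam x),
               is_derive x (e2 x) t 0
             & is_derive x (e3 x) t 0])
      & exists c : R, forall x, U x -> theta x + c = - (t x) / 3].
Proof.
move=> oU cU dE dF unitE0 dE0 horiz orth _ dE1 dlb db1 dth V.
have hV x : U x -> [/\ is_derive x (e2 x) V 0, is_derive x (e3 x) V 0
                     & is_derive x (e1 x) V (iC ((3 * lam x) *: V x))].
  move=> Ux; have [d1 d2 d3] := dE0 x Ux; have [f1 f2 f3] := dE1 x Ux.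
  have [l2 l3 b2 b3] := dlb x Ux; have [l1 b1'] := db1 x Ux.
  split; [exact: is_derive_Vfield0 b2 l2 d2 f2 | exact: is_derive_Vfield0 b3 l3 d3 f3 |].
  exact: is_derive_Vfield_iC b1' l1 d1 f1.
split; first exact: hV.
have V1 x : U x -> inner (V x) (V x) = 1.
  move=> Ux; have [h11 _] := orth x Ux ord0 ord0; have [h10 h1i] := horiz x Ux ord0.
  exact: Vfield_unit (unitE0 x Ux) h11 h10 h1i.
have dW z : U z -> forall u,
    is_derive z u (fun y => cmul (cos (3 * theta y)) (sin (3 * theta y)) (V y)) 0.
  move=> Uz; have [d0 d1 _ _] := dE z Uz; have [dl db dt] := dF z Uz.
  have [t2 t3 t1] := dth z Uz; have [v2 v3 v1] := hV z Uz.
  apply: (@is_derive0_orthonormal_frame _ _ _ E0 _ z (fun j => nth e1 [:: e1; e2; e3] j z)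
           (fun j => nth E0 [:: E1; E2; E3] j z) d0).
  - exact: differentiable_rot (differentiableZ 3 dt) (differentiable_Vfield db dl d0 d1).
  - by case=> [[|[|[|//]]] ?] /=; have [] := dE0 z Uz.
  - by move=> j k; have [] := orth z Uz j k.
  case=> [[|[|[|//]]] ?] /=; first exact: is_derive_rotZ_eq0 t1 v1.
  + by apply: (is_derive_rotZ_eq0 _ (c := 0)); rewrite ?oppr0 // mulr0 scale0r linear0.
  + by apply: (is_derive_rotZ_eq0 _ (c := 0)); rewrite ?oppr0 // mulr0 scale0r linear0.
have [v v1 Vv] := rot_stationary_phase oU cU V1 dW.
exists v, (fun y => - (3 * theta y)); split => // [x Ux|]; last first.
  by exists 0 => x Ux; rewrite addr0; field.
have [t2 t3 t1] := dth x Ux; split; first exact: Vv.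
- by have := is_deriveN (is_deriveZ 3 t1); rewrite scalerN opprK.
- by have := is_deriveN (is_deriveZ 3 t2); rewrite scaler0 oppr0.
- by have := is_deriveN (is_deriveZ 3 t3); rewrite scaler0 oppr0.
Qed.
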